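(* Let $C=c_0c_1\dots c_{m-1}c_0$ and $D=(0)(1)\dots(n-1)(0)$ be reflexive digraph cycles with $D$ non-contractible, and let $i \in \{1,\dots,n\}$ (a vertex of $D$, with $n \equiv 0$). The graph $\mathrm{Mon}_1(C,D;i)$ is connected. Moreover, if it is nonempty, there are elements $\Phi_i^m$ and $\Phi_i^M$ of $\mathrm{Mon}_1(C,D;i)$ such that for every element $\phi$ of $\mathrm{Mon}_1(C,D;i)$ there is a sequence of monotone one-step up edges, through elements of $\mathrm{Mon}_1(C,D;i)$, from $\Phi_i^m$ to $\phi$, and one from $\phi$ to $\Phi_i^M$.
   Context: A digraph is a binary relation $\to$ on a finite vertex set; reflexive means every vertex has a loop. A digraph cycle $C=c_0c_1\dots c_{m-1}c_0$ (indices mod $m$, $m\ge 3$) has underlying graph the cycle with edges $c_ic_{i+1}$; $D=(0)(1)\dots(n-1)(0)$ has vertex set the integers mod $n$. $D$ is non-contractible if it has length at least $4$ or is a directed $3$-cycle. A homomorphism $\phi:C\to D$ satisfies $u\to v\Rightarrow\phi(u)\to\phi(v)$. $\mathrm{Hom}(C,D)$ is the digraph on homomorphisms with $\phi\to\phi'$ iff $\phi(u)\to\phi'(v)$ for all arcs $u\to v$ of $C$; connectivity refers to its underlying graph. Under $\phi$, edge $c_ic_{i+1}$ is increasing, stationary or decreasing as $\phi(c_{i+1})-\phi(c_i)$ is $1,0,-1$ (mod $n$); the wind of $\phi$ is (number of increasing minus number of decreasing edges)$/n$. $\mathrm{Mon}_1(C,D;i)$ is the subgraph of $\mathrm{Hom}(C,D)$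 induced by the homomorphisms $\phi$ of wind $1$ in which every edge is increasing or stationary and with $\phi(c_0)=i$. A monotone one-step up edge is a pair $(\phi,\phi')$ of such monotone wind-$1$ homomorphisms where, for some subpath of $C$ with vertex set $S$ all of whose edges are stationary under $\phi$ (so $\phi(S)=\{d\}$), $\phi'$ agrees with $\phi$ off $S$ and maps $S$ to $d+1$ (such $\phi,\phi'$ are adjacent in $\mathrm{Hom}(C,D)$). *)

From HB Require Import structures.
From mathcomp Require Import all_boot all_order all_algebra.
Set Implicit Arguments. Unset Strict Implicit. Unset Printing Implicit Defensive.
Import Order.TTheory GRing.Theory Num.Theory.

(* A digraph on vertex set 'I_m (= integers mod m, successor ordS) is a
   relation E : rel 'I_m ; u -> v is E u v. *)

Definition refl_cycle (m : nat) (E : rel 'I_m) : Prop :=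
  [/\ 3 <= m,
      (forall u, E u u),
      (forall u v, u != v -> E u v -> (v == ordS u) || (u == ordS v)) &
      (forall u, E u (ordS u) || E (ordS u) u)].

Definition directed3 (n : nat) (E : rel 'I_n) : Prop :=
  n = 3 /\
  ((forall j, E j (ordS j) && ~~ E (ordS j) j) \/
   (forall j, E (ordS j) j && ~~ E j (ordS j))).

Definition noncontractible (n : nat) (E : rel 'I_n) : Prop :=
  4 <= n \/ directed3 E.

Definition is_hom (m n : nat) (EC : rel 'I_m) (ED : rel 'I_n)
  (phi : {ffun 'I_m -> 'I_n}) : bool :=
  [forall u, forall v, EC u v ==> ED (phi u) (phi v)].

Definition hom_arc (m n : nat) (EC : rel 'I_m) (ED : rel 'I_n)
  (phi psi : {ffun 'I_m -> 'I_n}) : bool :=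
  [forall u, forall v, EC u v ==> ED (phi u) (psi v)].

Definition increasing (m n : nat) (phi : {ffun 'I_m -> 'I_n}) (u : 'I_m) :=
  phi (ordS u) == ordS (phi u).
Definition stationary (m n : nat) (phi : {ffun 'I_m -> 'I_n}) (u : 'I_m) :=
  phi (ordS u) == phi u.
Definition decreasing (m n : nat) (phi : {ffun 'I_m -> 'I_n}) (u : 'I_m) :=
  phi u == ordS (phi (ordS u)).

Definition wind (m n : nat) (phi : {ffun 'I_m -> 'I_n}) : rat :=
  ((#|[pred u | increasing phi u]|%:Z - #|[pred u | decreasing phi u]|%:Z)%R%:~R
    / n%:R)%R.

Definition mon1_hom (m n : nat) (EC : rel 'I_m) (ED : rel 'I_n)
  (phi : {ffun 'I_m -> 'I_n}) : bool :=
  [&& is_hom EC ED phi,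
      [forall u, increasing phi u || stationary phi u] &
      wind phi == 1%R].

Definition starts_at (m n : nat) (phi : {ffun 'I_m -> 'I_n}) (i : 'I_n) : bool :=
  [forall x : 'I_m, (val x == 0) ==> (phi x == i)].

Definition Mon1 (m n : nat) (EC : rel 'I_m) (ED : rel 'I_n) (i : 'I_n)
  : {set {ffun 'I_m -> 'I_n}} :=
  [set phi | mon1_hom EC ED phi && starts_at phi i].

Definition induced_und (m n : nat) (EC : rel 'I_m) (ED : rel 'I_n)
  (M : {set {ffun 'I_m -> 'I_n}}) : rel {ffun 'I_m -> 'I_n} :=
  fun phi psi => [&& phi \in M, psi \in M & hom_arc EC ED phi psi || hom_arc EC ED psi phi].

Definition in_subpath (m : nat) (a : 'I_m) (k : nat) (x : 'I_m) : bool :=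
  [exists j : 'I_m.+1, (j < k) && (x == iter j (@ordS m) a)].

Definition one_step_up (m n : nat) (EC : rel 'I_m) (ED : rel 'I_n)
  (phi phi' : {ffun 'I_m -> 'I_n}) : bool :=
  [&& mon1_hom EC ED phi, mon1_hom EC ED phi' &
   [exists a : 'I_m, exists k : 'I_m.+1,
      [&& 0 < k,
          [forall j : 'I_m.+1, (j.+1 < k) ==> stationary phi (iter j (@ordS m) a)] &
          [forall x, phi' x == (if in_subpath a k x then ordS (phi x) else phi x)]]]].

Definition up_in (m n : nat) (EC : rel 'I_m) (ED : rel 'I_n)
  (M : {set {ffun 'I_m -> 'I_n}}) : rel {ffun 'I_m -> 'I_n} :=
  fun phi psi => [&& phi \in M, psi \in M & one_step_up EC ED phi psi].

From mathcomp Require Import all_boot all_order all_algebra zify.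

(* A monotone wind-1 homomorphism phi with phi(c_0) = i is determined by its
   height h(x), the number of increasing edges among the first x edges of C,
   through phi(c_x) = i + h(x).  The heights that occur are the lattice paths
   from 0 to n in m steps of 0 or 1 whose increasing steps each satisfy a
   condition depending only on the edge and on the level it starts from.
   This locality makes pointwise maxima and minima of heights again heights,
   so Mon_1(C,D;i) has a top and a bottom element.  If h_phi <= h_psi and
   they differ, let c_p c_{p+1} be the first edge on which psi rises and phi
   does not: raising by one level the maximal flat stretch of phi after c_p is
   a one-step up edge, an arc of Hom(C,D) (in the direction of the arcs of D
   between the two levels involved), and stays below psi.  Iterating joins
   the bottom to every element and every element to the top. *)

Lemma iter_ordS_val {n} (x : 'I_n) k : val (iter k (@ordS n) x) = (x + k) %% n.
Proof.
elim: k => [|k IH] /=; first by rewrite addn0 modn_small.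
by rewrite IH -addn1 modnDml addn1 addnS.
Qed.

Lemma iter_ordS_id {n} (x : 'I_n) k : (iter k (@ordS n) x == x) = (n %| k).
Proof.
rewrite -val_eqE iter_ordS_val -[X in _ == X](modn_small (ltn_ord x)).
by rewrite -[X in _ == X %% n]addn0 eqn_modDl mod0n.
Qed.

Lemma in_subpath_interval {m} (a : 'I_m) (k : 'I_m.+1) x :
  a + k <= m -> in_subpath a k x = (a <= x < a + k).
Proof.
move=> le_akm; apply/existsP/idP => [[j /andP[lt_jk /eqP ->]]|/andP[le_ax lt_xak]].
  by rewrite iter_ordS_val modn_small; lia.
have lt_j : x - a < m.+1 by have := ltn_ord x; lia.
exists (Ordinal lt_j); apply/andP; split; first by rewrite /=; lia.
by rewrite -val_eqE iter_ordS_val /= subnKC // modn_small.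
Qed.

Lemma ltn_sum (I : finType) (F G : I -> nat) :
  (forall x, F x <= G x) -> (exists x, F x < G x) -> \sum_x F x < \sum_x G x.
Proof.
move=> le_FG [x lt_x]; rewrite (bigD1 x) //= [X in _ < X](bigD1 x) //= -addSn.
by apply: leq_add => //; apply: leq_sum => y _.
Qed.

Section MonotoneWindOne.
Set Implicit Arguments.
Unset Strict Implicit.

Variables (m n : nat) (EC : rel 'I_m) (ED : rel 'I_n) (i : 'I_n).
Hypothesis n_gt2 : 2 < n.
Hypothesis EC_cycle : forall u v, u != v -> EC u v -> (v == ordS u) || (u == ordS v).
Hypothesis ED_loop : forall u, ED u u.
Hypothesis ED_edge : forall u, ED u (ordS u) || ED (ordS u) u.

Local Notation M := (Mon1 EC ED i).

Lemma ordS_neq (d : 'I_n) : (ordS d == d) = false.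
Proof. by rewrite (iter_ordS_id d 1) dvdn1; apply/negbTE; lia. Qed.

Lemma ordS2_neq (d : 'I_n) : (ordS (ordS d) == d) = false.
Proof. by rewrite (iter_ordS_id d 2) gtnNdvd. Qed.

Lemma stationary_increasing (phi : {ffun 'I_m -> 'I_n}) v :
  stationary phi v -> increasing phi v = false.
Proof. by rewrite /stationary /increasing => /eqP ->; rewrite eq_sym ordS_neq. Qed.

Lemma monotone_decreasing (phi : {ffun 'I_m -> 'I_n}) v :
  increasing phi v || stationary phi v -> decreasing phi v = false.
Proof. by rewrite /decreasing => /orP[] /eqP ->; rewrite eq_sym ?ordS2_neq ?ordS_neq. Qed.

Lemma wind_eq1 (phi : {ffun 'I_m -> 'I_n}) : (forall v, decreasing phi v = false) ->
  (wind phi == 1%R) = (#|[pred u | increasing phi u]| == n).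
Proof.
move=> no_dec; rewrite /wind; have -> : #|[pred u | decreasing phi u]| = 0.
  by apply: eq_card0 => u; rewrite inE /= no_dec.
rewrite GRing.subr0 pmulrn; apply/eqP/eqP => [e|->].
  by apply/eqP; rewrite -(Num.Theory.eqr_nat rat); apply/eqP; apply: GRing.divr1_eq.
by rewrite GRing.divff // Num.Theory.pnatr_eq0 -lt0n; lia.
Qed.

Lemma hom_arcP (phi psi : {ffun 'I_m -> 'I_n}) :
  reflect (forall u v, EC u v -> ED (phi u) (psi v)) (hom_arc EC ED phi psi).
Proof.
apply: (iffP forallP) => [arc u v|arc u]; first by move/forallP: (arc u) => /(_ v) /implyP.
by apply/forallP => v; apply/implyP; apply: arc.
Qed.

Lemma cycle_arc u v : EC u v -> [\/ v = u, v = ordS u | u = ordS v].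
Proof.
case: (eqVneq u v) => [->|neq_uv E_uv]; first by constructor 1.
by case/orP: (EC_cycle neq_uv E_uv) => /eqP ->; [constructor 2|constructor 3].
Qed.

Lemma raise_hom_arc (phi psi : {ffun 'I_m -> 'I_n}) (S : pred 'I_m) (d : 'I_n) :
  is_hom EC ED phi ->
  (forall x, psi x = if x \in S then ordS d else phi x) ->
  (forall x, (x \in S) || (ordS x \in S) ->
     (phi x \in [:: d; ordS d]) && (phi (ordS x) \in [:: d; ordS d])) ->
  (ED d (ordS d) -> hom_arc EC ED phi psi) /\ (ED (ordS d) d -> hom_arc EC ED psi phi).
Proof.
move=> /hom_arcP hom psiE near_S.
have near u v : EC u v -> (u \in S) || (v \in S) ->
    (phi u \in [:: d; ordS d]) && (phi v \in [:: d; ordS d]).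
  case/cycle_arc=> [->|->|->]; last by rewrite orbC => /near_S; rewrite andbC.
    by rewrite orbb => Su; have := near_S u; rewrite Su => /(_ isT) /andP[->].
  exact: near_S.
split=> ED_d; apply/hom_arcP => u v E_uv; rewrite psiE.
  case: ifP => [Sv|_]; last exact: hom.
  have := near u v E_uv; rewrite Sv orbT => /(_ isT) /andP[+ _].
  by rewrite !inE => /orP[] /eqP ->; [exact: ED_d | exact: ED_loop].
case: ifP => [Su|_]; last exact: hom.
have := near u v E_uv; rewrite Su => /(_ isT) /andP[_].
by rewrite !inE => /orP[] /eqP ->; [exact: ED_d | exact: ED_loop].
Qed.

Lemma one_step_up_interval (phi psi : {ffun 'I_m -> 'I_n}) (p w : nat) :
  mon1_hom EC ED phi -> mon1_hom EC ED psi -> p < w < m ->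
  (forall x : 'I_m, p < x < w -> stationary phi x) ->
  (forall x : 'I_m, psi x = if p < x <= w then ordS (phi x) else phi x) ->
  one_step_up EC ED phi psi.
Proof.
move=> mon_phi mon_psi ltpwm flat psiE; rewrite /one_step_up mon_phi mon_psi /=.
have lt_a : p.+1 < m by lia.
have lt_k : w - p < m.+1 by lia.
apply/existsP; exists (Ordinal lt_a); apply/existsP; exists (Ordinal lt_k).
apply/and3P; split; first by rewrite /=; lia.
  apply/forallP => j; apply/implyP => /= lt_j.
  by apply: flat; rewrite iter_ordS_val /= modn_small; lia.
apply/forallP => x; rewrite psiE in_subpath_interval /=; last by lia.
by rewrite (_ : p.+1 + (w - p) = w.+1) ?ltnS //; lia.
Qed.

Definition level (k : nat) : 'I_n := iter k (@ordS n) i.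

Lemma level_n : level n = i.
Proof. by apply/eqP; rewrite iter_ordS_id. Qed.

Definition height (phi : {ffun 'I_m -> 'I_n}) (x : nat) : nat :=
  \sum_(v : 'I_m | v < x) increasing phi v.

Definition of_height (H : nat -> nat) : {ffun 'I_m -> 'I_n} := [ffun x : 'I_m => level (H x)].

Definition staircase (H : nat -> nat) : Prop :=
  [/\ H 0 = 0, H m = n & forall x, x < m -> H x <= H x.+1 <= (H x).+1].

Lemma height0 phi : height phi 0 = 0.
Proof. by rewrite /height big_pred0. Qed.

Lemma heightS phi x (lt_xm : x < m) :
  height phi x.+1 = height phi x + increasing phi (Ordinal lt_xm).
Proof.
rewrite /height (bigD1 (Ordinal lt_xm)) //= addnC; congr (_ + _).
by apply: eq_bigl => v; rewrite ltnS -val_eqE /= andbC -ltn_neqAle.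
Qed.

Lemma height_m phi : height phi m = #|[pred u | increasing phi u]|.
Proof.
rewrite /height -sum1_card big_mkcond [RHS]big_mkcond.
by apply: eq_bigr => v _; rewrite ltn_ord inE; case: increasing.
Qed.

Lemma staircase_mono H x y : staircase H -> x <= y <= m -> H x <= H y.
Proof.
case=> _ _ H_step /andP[]; elim: y => [|y IH]; first by rewrite leqn0 => /eqP ->.
rewrite leq_eqVlt => /orP[/eqP -> //|]; rewrite ltnS => le_xy lt_ym.
by have := H_step y lt_ym; have := IH le_xy (ltnW lt_ym); lia.
Qed.

Lemma staircase_step H (v : 'I_m) : staircase H -> H v.+1 = H v \/ H v.+1 = (H v).+1.
Proof. by case=> _ _ /(_ v (ltn_ord v)); lia. Qed.

Lemma of_height_ordS H v : staircase H -> of_height H (ordS v) = level (H v.+1).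
Proof.
case=> H0 Hm _; rewrite ffunE /=; case: (ltnP v.+1 m) => [lt_vm|ge_vm].
  by rewrite modn_small.
by rewrite (_ : v.+1 = m) ?modnn ?Hm ?H0 ?level_n //; have := ltn_ord v; lia.
Qed.

Lemma increasing_of_height H v : staircase H ->
  increasing (of_height H) v = (H v.+1 == (H v).+1).
Proof.
move=> sH; rewrite /increasing of_height_ordS // ffunE.
case: (staircase_step v sH) => ->; last by rewrite !eqxx.
by rewrite eq_sym ordS_neq; apply/esym/eqP; lia.
Qed.

Lemma stationary_of_height H v : staircase H ->
  stationary (of_height H) v = (H v.+1 == H v).
Proof.
move=> sH; rewrite /stationary of_height_ordS // ffunE.
case: (staircase_step v sH) => ->; first by rewrite !eqxx.
by rewrite ordS_neq; apply/esym/eqP; lia.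
Qed.

Lemma height_of_height H x : staircase H -> x <= m -> height (of_height H) x = H x.
Proof.
move=> sH; elim: x => [|x IH] lt_xm; first by rewrite height0; case: sH.
rewrite heightS IH ?(ltnW lt_xm) // increasing_of_height //.
by case: (staircase_step (Ordinal lt_xm) sH) => /= ->; rewrite ?eqxx; lia.
Qed.

Lemma Mon1_staircase phi : phi \in M -> staircase (height phi) /\ phi = of_height (height phi).
Proof.
rewrite inE => /andP[/and3P[_ /forallP mono wind1] /forallP start].
have no_dec v : decreasing phi v = false by apply: monotone_decreasing.
have sH : staircase (height phi).
  split; [exact: height0 | by rewrite height_m; apply/eqP; rewrite -wind_eq1 |].
  by move=> x lt_xm; rewrite heightS; case: increasing; lia.
split=> //; apply/ffunP => -[k lt_km]; rewrite ffunE.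
elim: k lt_km => [|k IH] lt_km; first by rewrite height0; apply/eqP/(implyP (start _)).
have lt_k : k < m by lia.
rewrite /= (heightS phi lt_k) (_ : Ordinal lt_km = ordS (Ordinal lt_k)); last first.
  by apply: val_inj; rewrite /= modn_small.
case/orP: (mono (Ordinal lt_k)) => [inc|stat].
  by move: (inc) => /eqP ->; rewrite inc IH addn1.
by move: (stat) => /eqP ->; rewrite stationary_increasing // IH addn0.
Qed.

Definition step_ok (v : 'I_m) (a : nat) : bool :=
  (EC v (ordS v) ==> ED (level a) (level a.+1)) &&
  (EC (ordS v) v ==> ED (level a.+1) (level a)).

Definition admissible (H : nat -> nat) : Prop :=
  staircase H /\ forall v : 'I_m, H v.+1 = (H v).+1 -> step_ok v (H v).

Lemma of_height_hom H : staircase H ->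
  is_hom EC ED (of_height H) <-> forall v : 'I_m, H v.+1 = (H v).+1 -> step_ok v (H v).
Proof.
move=> sH; split=> [/hom_arcP hom v step | ok].
  by apply/andP; split; apply/implyP => /hom; rewrite of_height_ordS // !ffunE step.
apply/hom_arcP => u v E_uv; case: (cycle_arc E_uv) => eq_uv; subst; first exact: ED_loop.
  rewrite of_height_ordS // ffunE; case: (staircase_step u sH) => [->|step].
    exact: ED_loop.
  by have /andP[/implyP ok_u _] := ok u step; rewrite step; apply: ok_u.
rewrite of_height_ordS // ffunE; case: (staircase_step v sH) => [->|step].
  exact: ED_loop.
by have /andP[_ /implyP ok_v] := ok v step; rewrite step; apply: ok_v.
Qed.

Lemma admissible_Mon1 H : admissible H ->
  of_height H \in M /\ forall x, x <= m -> height (of_height H) x = H x.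
Proof.
move=> [sH ok]; split; last by move=> x; apply: height_of_height.
have mono v : increasing (of_height H) v || stationary (of_height H) v.
  rewrite increasing_of_height // stationary_of_height //.
  by case: (staircase_step v sH) => ->; rewrite eqxx ?orbT.
rewrite inE; apply/andP; split; [apply/and3P; split|].
- exact/(of_height_hom sH).
- exact/forallP.
- rewrite wind_eq1 => [|v]; last exact: monotone_decreasing.
  by rewrite -height_m height_of_height //; case: sH => _ ->.
- by apply/forallP => x; apply/implyP => /eqP x0; rewrite ffunE x0; case: sH => ->.
Qed.

Lemma Mon1_mon1 phi : phi \in M -> mon1_hom EC ED phi.
Proof. by rewrite inE => /andP[]. Qed.

Lemma Mon1_hom phi : phi \in M -> is_hom EC ED phi.
Proof. by case/Mon1_mon1/and3P. Qed.

Lemma Mon1_admissible phi : phi \in M -> admissible (height phi) /\ phi = of_height (height phi).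
Proof.
move=> Mphi; have [sH phiE] := Mon1_staircase Mphi; do 2!split => //.
by apply/(of_height_hom sH); rewrite -phiE; apply: Mon1_hom.
Qed.

Lemma Mon1_inj phi psi : phi \in M -> psi \in M ->
  (forall x : 'I_m, height phi x = height psi x) -> phi = psi.
Proof.
move=> Mphi Mpsi eq_h.
rewrite (Mon1_admissible Mphi).2 (Mon1_admissible Mpsi).2.
by apply/ffunP => x; rewrite !ffunE eq_h.
Qed.

Section Combine.

Variable op : nat -> nat -> nat.
Hypothesis opxx : forall a, op a a = a.
Hypothesis op_step : forall a b c d, a <= b <= a.+1 -> c <= d <= c.+1 ->
  op a c <= op b d <= (op a c).+1 /\
  (op b d = (op a c).+1 -> a = op a c /\ b = a.+1 \/ c = op a c /\ d = c.+1).

Lemma admissible_combine G H : admissible G -> admissible H ->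
  admissible (fun x => op (G x) (H x)).
Proof.
move=> [[G0 Gm G_step] okG] [[H0 Hm H_step] okH]; do 2?split.
- by rewrite G0 H0 opxx.
- by rewrite Gm Hm opxx.
- by move=> x lt_xm; case: (op_step (G_step x lt_xm) (H_step x lt_xm)).
move=> v; case: (op_step (G_step v (ltn_ord v)) (H_step v (ltn_ord v))) => _ step.
by case/step=> [[<- /okG]|[<- /okH]].
Qed.

Lemma Mon1_combine phi psi : phi \in M -> psi \in M ->
  exists2 chi, chi \in M & forall x : 'I_m, height chi x = op (height phi x) (height psi x).
Proof.
move=> /Mon1_admissible[aphi _] /Mon1_admissible[apsi _].
have [Mchi chiE] := admissible_Mon1 (admissible_combine aphi apsi).
by exists (of_height (fun x => op (height phi x) (height psi x))) => // x;
  rewrite chiE // (ltnW (ltn_ord x)).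
Qed.

End Combine.

Lemma Mon1_top phi0 : phi0 \in M -> exists2 top, top \in M &
  forall phi, phi \in M -> forall x : 'I_m, height phi x <= height top x.
Proof.
move=> M0; case: (arg_maxnP (fun phi => \sum_(x : 'I_m) height phi x) M0) => top Mtop top_max.
exists top => // phi Mphi x; rewrite leqNgt; apply/negP => lt_x.
have [||chi Mchi chiE] := Mon1_combine (op := maxn) _ _ Mphi Mtop.
- exact: maxnn.
- by move=> a b c d ? ?; lia.
have := top_max chi Mchi; apply/negP; rewrite -ltnNge; apply: ltn_sum => [y|].
  by rewrite chiE leq_maxr.
by exists x; rewrite chiE; lia.
Qed.

Lemma Mon1_bottom phi0 : phi0 \in M -> exists2 bot, bot \in M &
  forall phi, phi \in M -> forall x : 'I_m, height bot x <= height phi x.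
Proof.
move=> M0; case: (arg_minnP (fun phi => \sum_(x : 'I_m) height phi x) M0) => bot Mbot bot_min.
exists bot => // phi Mphi x; rewrite leqNgt; apply/negP => lt_x.
have [||chi Mchi chiE] := Mon1_combine (op := minn) _ _ Mphi Mbot.
- exact: minnn.
- by move=> a b c d ? ?; lia.
have := bot_min chi Mchi; apply/negP; rewrite -ltnNge; apply: ltn_sum => [y|].
  by rewrite chiE geq_minr.
by exists x; rewrite chiE; lia.
Qed.

Definition raise (H : nat -> nat) (p w : nat) (x : nat) : nat := H x + (p < x <= w).

Lemma admissible_raise G (p : 'I_m) w c : admissible G -> p < w < m ->
  (forall x, p <= x <= w -> G x = c) -> G w.+1 = c.+1 -> step_ok p c ->
  admissible (raise G p w).
Proof.
move=> [[G0 Gm G_step] okG] ltpwm flat Gw1 ok_p; rewrite /raise; do 2?split.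
- by rewrite G0.
- by rewrite Gm; lia.
(* lia sees G x.+1 and G w.+1 as unrelated atoms, hence Gx1 and Gv1. *)
- move=> x lt_xm; have Gx1 : x = w -> G x.+1 = c.+1 by move->.
  by have := G_step x lt_xm; have := flat x; have := flat x.+1; lia.
move=> v; have Gv1 : v = w :> nat -> G v.+1 = c.+1 by move->.
have := G_step v (ltn_ord v); have := flat v; have := flat v.+1 => fv1 fv Gv step.
case: (eqVneq v p) => [->|neq_vp].
  by have -> : G p + (p < p <= w) = c by rewrite ltnn addn0; apply: flat; lia.
rewrite -val_eqE /= in neq_vp.
have Rv : G v + (p < v <= w) = G v by lia.
by rewrite Rv; apply: okG; lia.
Qed.

Lemma of_height_window G (p : 'I_m) w c (x : 'I_m) : staircase G -> w < m ->
  G p = c -> G w.+1 = c.+1 -> p <= x <= w ->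
  (of_height G x \in [:: level c; ordS (level c)]) &&
  (of_height G (ordS x) \in [:: level c; ordS (level c)]).
Proof.
move=> sG lt_wm Gp Gw1 le_pxw.
have near a : c <= a <= c.+1 -> level a \in [:: level c; ordS (level c)].
  move=> le_ca; have [->|->] : a = c \/ a = c.+1 by lia.
    by rewrite !inE eqxx.
  by rewrite !inE eqxx orbT.
have := staircase_mono (x:=p) (y:=x) sG; have := staircase_mono (x:=x.+1) (y:=w.+1) sG.
have := staircase_step x sG => step le_x1 le_px.
by rewrite of_height_ordS // ffunE !near //; lia.
Qed.

Lemma raise_edge G (p : 'I_m) w c : admissible G -> p < w < m ->
  (forall x, p <= x <= w -> G x = c) -> G w.+1 = c.+1 -> step_ok p c ->
  up_in EC ED M (of_height G) (of_height (raise G p w)) /\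
  induced_und EC ED M (of_height G) (of_height (raise G p w)).
Proof.
move=> aG ltpwm flat Gw1 ok_p; have sG := aG.1.
have [MG _] := admissible_Mon1 aG.
have [MR _] := admissible_Mon1 (admissible_raise aG ltpwm flat Gw1 ok_p).
have RE x : of_height (raise G p w) x =
    if p < x <= w then ordS (of_height G x) else of_height G x.
  by rewrite !ffunE /raise; case: ifP; rewrite ?addn1 ?addn0.
split; first rewrite /up_in MG MR.
  apply: (one_step_up_interval (Mon1_mon1 MG) (Mon1_mon1 MR) ltpwm _ RE).
  by move=> x lt_pxw; rewrite stationary_of_height // !flat //; lia.
rewrite /induced_und MG MR /=.
have [||arc_up arc_down] := raise_hom_arc (psi := of_height (raise G p w))
  (S := [pred x : 'I_m | p < x <= w]) (d := level c) (Mon1_hom MG).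
- move=> x; rewrite RE inE /=; case: ifP => // /andP[lt_px le_xw].
  by rewrite ffunE flat //; lia.
- move=> x in_x; apply: (of_height_window (p := p) (w := w) sG) => //; first by lia.
    by apply: flat; lia.
  move: in_x; rewrite !inE /=; case: (ltnP x.+1 m) => [lt_x1m|ge_x1m].
    by rewrite modn_small //; lia.
  by rewrite (_ : x.+1 = m) ?modnn; have := ltn_ord x; lia.
by case/orP: (ED_edge (level c)) => [/arc_up|/arc_down] ->; rewrite ?orbT.
Qed.

Lemma staircase_first_gap G T : staircase G -> staircase T ->
  (forall x : 'I_m, G x <= T x) -> (exists x : 'I_m, G x < T x) ->
  exists2 p : 'I_m, p.+1 < m & [/\ G p.+1 = G p, T p = G p & T p.+1 = (G p).+1].
Proof.
move=> [G0 _ G_step] [T0 _ T_step] le_GT [x0 lt_x0].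
have exP : exists x, (x < m) && (G x < T x) by exists x0; rewrite ltn_ord.
case: (ex_minnP exP) => -[|p]; first by rewrite G0 T0 ltnn andbF.
move=> /andP[lt_p1m lt_p1] min_p; have lt_pm : p < m by lia.
exists (Ordinal lt_pm) => //=.
have := min_p p; have := le_GT (Ordinal lt_pm); rewrite lt_pm /=.
by have := G_step p lt_pm; have := T_step p lt_pm; split; lia.
Qed.

Lemma staircase_flat_block G (p : 'I_m) c : staircase G -> p.+1 < m ->
  G p = c -> G p.+1 = c -> c < n ->
  exists2 w, p < w < m & (forall x, p <= x <= w -> G x = c) /\ G w.+1 = c.+1.
Proof.
move=> sG lt_p1m Gp Gp1 lt_cn.
have exW : exists x, [&& x < m, p < x & G x == c] by exists p.+1; rewrite lt_p1m ltnSn Gp1 eqxx.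
have ub x : [&& x < m, p < x & G x == c] -> x <= m by case/and3P => /ltnW.
case: (ex_maxnP exW ub) => w /and3P[lt_wm lt_pw /eqP Gw] max_w.
exists w; first by rewrite lt_pw.
split=> [x le_pxw|].
  by have := staircase_mono (x:=p) (y:=x) sG; have := staircase_mono (x:=x) (y:=w) sG; lia.
have := max_w w.+1; case: sG => _ Gm /(_ w lt_wm).
by case: (ltnP w.+1 m) => [|ge_w1m]; [|rewrite (_ : w.+1 = m) in Gm *]; lia.
Qed.

Lemma Mon1_step_towards g t : g \in M -> t \in M ->
  (forall x : 'I_m, height g x <= height t x) -> (exists x : 'I_m, height g x < height t x) ->
  exists g', [/\ up_in EC ED M g g', induced_und EC ED M g g',
    forall x : 'I_m, height g x <= height g' x <= height t x &
    exists x : 'I_m, height g x < height g' x].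
Proof.
move=> Mg Mt le_gt lt_gt.
have [ag gE] := Mon1_admissible Mg; have [[st okt] _] := Mon1_admissible Mt.
have [p lt_p1m [Gp1 Tp Tp1]] := staircase_first_gap ag.1 st le_gt lt_gt.
have lt_cn : height g p < n.
  by have := staircase_mono (x:=p.+1) (y:=m) st; case: st => _ -> _; lia.
have [w ltpwm [flat Gw1]] := staircase_flat_block ag.1 lt_p1m erefl Gp1 lt_cn.
have ok_p : step_ok p (height g p) by rewrite -Tp; apply: okt; rewrite Tp.
have [_ hR] := admissible_Mon1 (admissible_raise ag ltpwm flat Gw1 ok_p).
have [up und] := raise_edge ag ltpwm flat Gw1 ok_p; rewrite -gE in up und.
exists (of_height (raise (height g) p w)); split => //.
  move=> x; rewrite hR ?(ltnW (ltn_ord x)) // /raise; have := ltn_ord x; have := le_gt x.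
  by have := flat x; have := staircase_mono (x:=p.+1) (y:=x) st; lia.
by exists (Ordinal lt_p1m); rewrite hR /raise /=; lia.
Qed.

Lemma Mon1_reach g t : g \in M -> t \in M -> (forall x : 'I_m, height g x <= height t x) ->
  connect (up_in EC ED M) g t /\ connect (induced_und EC ED M) g t.
Proof.
move=> Mg Mt; have [k] := ubnP (\sum_(x : 'I_m) (height t x - height g x)).
elim: k g Mg => // k IH g Mg lt_k le_gt.
case: (boolP [forall x : 'I_m, height g x == height t x]) => [/forallP eq_gt|/forallPn[x neq_x]].
  by rewrite (Mon1_inj Mg Mt (fun x => eqP (eq_gt x))); split; apply: connect0.
have lt_x : height g x < height t x by rewrite ltn_neqAle neq_x le_gt.
have [g' [up und le_g' [y lt_y]]] := Mon1_step_towards Mg Mt le_gt (ex_intro _ x lt_x).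
have Mg' : g' \in M by case/and3P: up.
have [||c_up c_und] := IH g' Mg'.
- rewrite ltnS in lt_k; apply: (leq_trans _ lt_k); apply: ltn_sum => [z|].
    by have := le_g' z; lia.
  by exists y; have := le_g' y; lia.
- by move=> z; case/andP: (le_g' z).
by split; [apply: connect_trans (connect1 up) c_up | apply: connect_trans (connect1 und) c_und].
Qed.

Lemma Mon1_connected phi psi : phi \in M -> psi \in M ->
  connect (induced_und EC ED M) phi psi.
Proof.
move=> Mphi Mpsi; have [top Mtop top_max] := Mon1_top Mphi.
have [_ c_phi] := Mon1_reach Mphi Mtop (top_max _ Mphi).
have [_ c_psi] := Mon1_reach Mpsi Mtop (top_max _ Mpsi).
have sym : connect_sym (induced_und EC ED M).
  by apply: sym_connect_sym => a b; rewrite /induced_und andbCA orbC.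
by apply: connect_trans c_phi _; rewrite sym.
Qed.

Lemma Mon1_extremal phi0 : phi0 \in M -> exists bot top, [/\ bot \in M, top \in M &
  forall phi, phi \in M -> connect (up_in EC ED M) bot phi /\ connect (up_in EC ED M) phi top].
Proof.
move=> M0; have [bot Mbot bot_min] := Mon1_bottom M0; have [top Mtop top_max] := Mon1_top M0.
exists bot, top; split=> // phi Mphi; split.
  exact: (Mon1_reach Mbot Mphi (bot_min _ Mphi)).1.
exact: (Mon1_reach Mphi Mtop (top_max _ Mphi)).1.
Qed.

End MonotoneWindOne.

Theorem fact3p5 (m n : nat) (EC : rel 'I_m) (ED : rel 'I_n) (i : 'I_n) :
  refl_cycle EC -> refl_cycle ED -> noncontractible ED ->
  (forall phi psi, phi \in Mon1 EC ED i -> psi \in Mon1 EC ED i ->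
     connect (induced_und EC ED (Mon1 EC ED i)) phi psi) /\
  ((exists phi, phi \in Mon1 EC ED i) ->
   exists PhiMin PhiMax,
     [/\ PhiMin \in Mon1 EC ED i, PhiMax \in Mon1 EC ED i &
      forall phi, phi \in Mon1 EC ED i ->
        connect (up_in EC ED (Mon1 EC ED i)) PhiMin phi /\
        connect (up_in EC ED (Mon1 EC ED i)) phi PhiMax]).
Proof.
move=> [_ _ EC_cycle _] [n_gt2 ED_loop _ ED_edge] _.
split=> [phi psi|[phi0]]; first exact: Mon1_connected.
exact: Mon1_extremal.
Qed.
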